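(* If a graph $G$ contains a bad attachment $\Gamma$ with $V(\Gamma)\ne V(G)$, then $G\notin\mathcal{S}_3$.
   Context: Graphs may have parallel edges but no loops. A bad attachment of $G$ is an induced subgraph $\Gamma$ with $3\le|V(\Gamma)|\le 6$ such that the number of edges of $G$ between $V(\Gamma)$ and $V(G)\setminus V(\Gamma)$ is at most $3|V(\Gamma)|-|E(\Gamma)|$. $G\in\mathcal{S}_3$ means: for every $\beta:V(G)\to\mathbb{Z}_3$ with $\sum_v\beta(v)\equiv0\pmod3$ there is a strongly-connected orientation $D$ of $G$ with $d^+_D(v)-d^-_D(v)\equiv\beta(v)\pmod3$ for all $v$. *)

From HB Require Import structures.
From mathcomp Require Import all_boot all_order all_algebra.
Set Implicit Arguments. Unset Strict Implicit. Unset Printing Implicit Defensive.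
Import GRing.Theory.

(* A finite multigraph (parallel edges allowed) on vertex type V with edge
   type E: each edge e has endpoints (tail0 e, head0 e) in a fixed reference
   direction. Loops are excluded by the hypothesis [loopless]. *)
Record multigraph (V E : finType) := Multigraph {
  ends : E -> V * V
}.

Definition loopless (V E : finType) (G : multigraph V E) : Prop :=
  forall e : E, (ends G e).1 != (ends G e).2.

(* An orientation assigns to each edge a direction:
   D e = true  means e is oriented (ends e).1 -> (ends e).2,
   D e = false means e is oriented (ends e).2 -> (ends e).1. *)
Definition orientation (E : finType) := E -> bool.

Definition otail (V E : finType) (G : multigraph V E) (D : orientation E) (e : E) : V :=
  if D e then (ends G e).1 else (ends G e).2.
Definition ohead (V E : finType) (G : multigraph V E) (D : orientation E) (e : E) : V :=
  if D e then (ends G e).2 else (ends G e).1.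

Definition outdeg (V E : finType) (G : multigraph V E) (D : orientation E) (v : V) : nat :=
  #|[set e | otail G D e == v]|.
Definition indeg (V E : finType) (G : multigraph V E) (D : orientation E) (v : V) : nat :=
  #|[set e | ohead G D e == v]|.

Definition arc (V E : finType) (G : multigraph V E) (D : orientation E) : rel V :=
  fun u w => [exists e, (otail G D e == u) && (ohead G D e == w)].

Definition strongly_connected (V E : finType) (G : multigraph V E) (D : orientation E) : Prop :=
  forall u w : V, connect (arc G D) u w.

Definition in_S3 (V E : finType) (G : multigraph V E) : Prop :=
  forall beta : V -> 'Z_3, (\sum_(v : V) beta v = 0)%R ->
    exists D : orientation E, strongly_connected G D /\
      forall v, ((outdeg G D v)%:R - (indeg G D v)%:R : 'Z_3)%R = beta v.

Definition inner_edges (V E : finType) (G : multigraph V E) (S : {set V}) : {set E} :=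
  [set e | ((ends G e).1 \in S) && ((ends G e).2 \in S)].
Definition cut_edges (V E : finType) (G : multigraph V E) (S : {set V}) : {set E} :=
  [set e | ((ends G e).1 \in S) (+) ((ends G e).2 \in S)].

(* Induced subgraph G[S] is a bad attachment: 3 <= |S| <= 6 and
   |cut| <= 3|S| - |E(G[S])| (over the integers; written additively). *)
Definition bad_attachment (V E : finType) (G : multigraph V E) (S : {set V}) : Prop :=
  [/\ 3 <= #|S|, #|S| <= 6 &
      #|cut_edges G S| + #|inner_edges G S| <= 3 * #|S|]%N.

From Pilot Require Import Defs.
From mathcomp Require Import all_boot all_order all_algebra.
From mathcomp Require Import zify ring.
Set Implicit Arguments. Unset Strict Implicit. Unset Printing Implicit Defensive.
Import GRing.Theory.

(* Let S be a bad attachment and w0 a vertex outside S.  Take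
   beta(v) = deg(v) (mod 3) on S, beta(w0) = -(sum of these), and 0 elsewhere.
   A strongly connected orientation D realizing beta satisfies, at every
   v in S, out(v) - in(v) = out(v) + in(v) in Z_3, i.e. 2 in(v) = 0, so
   3 | in(v); strong connectivity gives in(v) > 0, hence in(v) >= 3.  Summing,
   at least 3|S| edges have their head in S.  But every such edge is an inner
   or cut edge, and strong connectivity forces some cut edge to LEAVE S, so
   fewer than |cut| + |inner| <= 3|S| edges point into S: a contradiction.  The
   argument never uses that G is loopless. *)

Lemma card_set_sum (T : finType) (P : pred T) :
  #|[set x | P x]| = (\sum_x (P x : nat))%N.
Proof.
rewrite -sum1_card big_mkcond /=; apply: eq_bigr => x _.
by rewrite inE; case: (P x).
Qed.

Lemma sum_eq_indicator (T : finType) (S : {set T}) (x : T) :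
  (\sum_(v in S) (x == v : nat))%N = (x \in S).
Proof.
case xS: (x \in S).
  rewrite (bigD1 x) //= eqxx big1 // => v /andP [_ nvx].
  by rewrite eq_sym (negPf nvx).
by rewrite big1 // => v vS; case: eqP => // xv; rewrite xv vS in xS.
Qed.

Lemma connect_exit (T : finType) (r : rel T) (a : pred T) x y :
  connect r x y -> a x -> ~~ a y -> exists u u', [/\ r u u', a u & ~~ a u'].
Proof.
move=> /connectP [p rp ->]; elim: p x rp => [|z p IHp] x /=; first by move=> _ ->.
move=> /andP [rxz rp] ax; case az: (a z); first exact: IHp.
by move=> _; exists x, z; rewrite rxz ax az.
Qed.

Lemma Z3_double_eq0 (n : nat) : ((n + n)%:R = 0 :> 'Z_3)%R -> (3 %| n)%N.
Proof.
move/(congr1 (@nat_of_ord _)); rewrite (val_Zp_nat (p:=3)) //= => n2; lia.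
Qed.

Section Orientations.

Variables (V E : finType) (G : multigraph V E) (D : orientation E).

Definition degree (v : V) : nat :=
  (\sum_e (((ends G e).1 == v : nat) + ((ends G e).2 == v : nat)))%N.

Lemma outdeg_add_indeg (v : V) : (outdeg G D v + indeg G D v)%N = degree v.
Proof.
rewrite /outdeg /indeg !card_set_sum -big_split /=; apply: eq_bigr => e _.
rewrite /otail /Defs.ohead; case: (D e) => //=; by rewrite addnC.
Qed.

Lemma indeg_div3 (v : V) :
  ((outdeg G D v)%:R - (indeg G D v)%:R = (degree v)%:R :> 'Z_3)%R ->
  (3 %| indeg G D v)%N.
Proof.
rewrite -outdeg_add_indeg natrD => net; apply: Z3_double_eq0.
have -> : ((indeg G D v + indeg G D v)%N%:R =
    ((outdeg G D v)%:R + (indeg G D v)%:R) -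
    ((outdeg G D v)%:R - (indeg G D v)%:R) :> 'Z_3)%R by rewrite natrD; ring.
by rewrite net subrr.
Qed.

Hypothesis SC : strongly_connected G D.

Lemma leaving_edge (A : pred V) u w :
  A u -> ~~ A w -> exists e, A (otail G D e) && ~~ A (Defs.ohead G D e).
Proof.
move=> Au Aw; have [x [y [/existsP [e /andP [/eqP tx /eqP hy]] Ax Ay]]] :=
  connect_exit (SC u w) Au Aw.
by exists e; rewrite tx hy Ax.
Qed.

Lemma indeg_gt0 (v w : V) : w != v -> (0 < indeg G D v)%N.
Proof.
move=> wv; have [|e /andP [_ /negbNE hv]] := @leaving_edge (predC1 v) w v wv.
  by rewrite /= eqxx.
by apply/card_gt0P; exists e; rewrite inE.
Qed.

End Orientations.

Lemma sum_indeg (V E : finType) (G : multigraph V E) (D : orientation E)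
    (S : {set V}) :
  (\sum_(v in S) indeg G D v)%N = #|[set e | Defs.ohead G D e \in S]|.
Proof.
rewrite card_set_sum /indeg; under eq_bigr do rewrite card_set_sum.
by rewrite exchange_big /=; apply: eq_bigr => e _; exact: sum_eq_indicator.
Qed.

(* An arc with head in S is an inner or a cut edge; if moreover some arc
   leaves S, that cut edge is not counted, so the count is strict. *)
Lemma heads_in_lt (V E : finType) (G : multigraph V E) (D : orientation E)
    (S : {set V}) (e0 : E) :
  otail G D e0 \in S -> Defs.ohead G D e0 \notin S ->
  (#|[set e | Defs.ohead G D e \in S]| <
   #|cut_edges G S| + #|inner_edges G S|)%N.
Proof.
move=> tS hS; rewrite /cut_edges /inner_edges !card_set_sum -big_split /=.
rewrite (bigD1 e0) // [X in (_ < X)%N](bigD1 e0) //= (negPf hS) add0n.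
have -> : ((ends G e0).1 \in S) (+) ((ends G e0).2 \in S).
  by move: tS hS; rewrite /otail /Defs.ohead; case: (D e0) => -> /negPf ->.
rewrite -addnA add1n ltnS; apply: leq_trans (leq_addl _ _); apply: leq_sum => e _.
rewrite /Defs.ohead; case: (D e);
  by case: ((ends G e).1 \in S); case: ((ends G e).2 \in S).
Qed.

(* Any prescription f on S extends to a zero-sum boundary function, as long
   as some vertex w0 outside S can absorb the total. *)
Lemma zero_sum_extension (V : finType) (S : {set V}) (w0 : V) (f : V -> 'Z_3) :
  w0 \notin S ->
  exists beta : V -> 'Z_3, (\sum_v beta v = 0)%R /\ {in S, beta =1 f}.
Proof.
move=> w0S; pose beta v := ((if v \in S then f v else 0) -
  (if v == w0 then \sum_(u in S) f u else 0))%R.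
exists beta; split.
  by rewrite big_split /= sumrN -!big_mkcond /= big_pred1_eq subrr.
move=> v vS; rewrite /beta vS ifF ?subr0 //.
by apply/negbTE; apply: contraNneq w0S => <-.
Qed.

Theorem mainTheorem8 (V E : finType) (G : multigraph V E) (S : {set V}) :
  loopless G -> bad_attachment G S -> S != [set: V] -> ~ in_S3 G.
Proof.
move=> _ [S_ge3 _ bad] SnT inS3.
have /properP [_ [w0 _ w0S]] : S \proper [set: V] by rewrite properT.
have [beta [sum0 betaS]] := zero_sum_extension (fun v => (degree G v)%:R%R) w0S.
have [D [SC netD]] := inS3 beta sum0.
have indeg_ge3 v : v \in S -> (3 <= indeg G D v)%N.
  move=> vS; apply: dvdn_leq.
    by apply: (indeg_gt0 SC (w := w0)); apply: contraNneq w0S => ->.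
  by apply: indeg_div3; rewrite netD betaS.
have [v0 v0S] : exists v0, v0 \in S by apply/card_gt0P; apply: leq_trans S_ge3.
have [e0 /andP [tS hS]] := leaving_edge SC (A := mem S) v0S w0S.
have many_heads : (3 * #|S| <= \sum_(v in S) indeg G D v)%N.
  by rewrite mulnC -sum_nat_const; apply: leq_sum.
have := heads_in_lt tS hS; rewrite -sum_indeg; lia.
Qed.
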